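(* Let $X\subset U\subset\mathbb{R}^n$, where $U$ is open and $X$ is closed in $U$, and let $p\in\mathbb{N}$, $k\ge1$. For $i=0,1,\dots,k$ let $(a_{ij})_{j\ge1}$ be a sequence in $X$ and $(\xi_{ij})_{j\ge1}$ a sequence in $\mathcal{P}_p^*$ such that: (1) the sequences $(a_{ij})_j$, $i=0,\dots,k$, converge to a common point $a\in X$, and $\sum_{i=0}^k\xi_{ij}$ converges to $\xi\in\mathcal{P}_p^*$ as $j\to\infty$; (2) $|a_{ij}-a_{0j}|^{p-|\alpha|}|\xi_{ij,\alpha}(a_{ij})|\le c$ for all $i,j$ and all $|\alpha|\le p$, where $c$ is a constant. If $F=(F^\alpha)_{|\alpha|\le p}$ is a $\mathcal{C}^p$ Whitney field on $X$, then $$\xi(F,a)=\lim_{j\to\infty}\sum_{i=0}^k\xi_{ij}(F,a_{ij}).$$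
   Context: $\mathcal{P}_p$ is the space of real polynomials on $\mathbb{R}^n$ of degree $\le p$, $\mathcal{P}_p^*$ its dual; for $\xi\in\mathcal{P}_p^*$, $b\in\mathbb{R}^n$, $|\alpha|\le p$, $\xi_\alpha(b):=\xi(\tfrac1{\alpha!}(x-b)^\alpha)$. For a family $F=(F^\alpha)_{|\alpha|\le p}$ of functions $F^\alpha:X\to\mathbb{R}$ and $a\in X$, $T^p_aF(x):=\sum_{|\alpha|\le p}\frac1{\alpha!}F^\alpha(a)(x-a)^\alpha$ and $\xi(F,a):=\xi(T^p_aF)$. Set $\delta_\alpha(a,b):=\big(F^\alpha(b)-\sum_{|\beta|\le p-|\alpha|}\frac1{\beta!}F^{\alpha+\beta}(a)(b-a)^\beta\big)/|b-a|^{p-|\alpha|}$ for $a\ne b$ in $X$. $F$ is a $\mathcal{C}^p$ Whitney field on $X$ if for every $c\in X$ and every $|\alpha|\le p$, $\delta_\alpha(a,b)\to0$ as $a,b\to c$ in $X$ with $a\ne b$. *)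

From HB Require Import structures.
From mathcomp Require Import all_boot all_order all_algebra.
From mathcomp Require Import all_classical all_reals all_analysis.
Set Implicit Arguments. Unset Strict Implicit. Unset Printing Implicit Defensive.
Import Order.TTheory GRing.Theory Num.Theory numFieldNormedType.Exports.
Local Open Scope ring_scope.
Local Open Scope classical_set_scope.

Definition mindex (n : nat) := 'I_n -> nat.
Definition mdeg n (al : mindex n) : nat := (\sum_(i < n) al i)%N.
Definition mfact n (al : mindex n) : nat := (\prod_(i < n) (al i)`!)%N.
Definition mindex_add n (al be : mindex n) : mindex n := fun i => (al i + be i)%N.

(* finite enumeration of multi-indices with all entries <= p *)
Definition bmi (p n : nat) := {ffun 'I_n -> 'I_p.+1}.
Definition of_bmi p n (b : bmi p n) : mindex n := fun i => nat_of_ord (b i).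

Definition sum_mi (R : realType) (p n : nat) (G : mindex n -> R) : R :=
  \sum_(b : bmi p n | (mdeg (of_bmi b) <= p)%N) G (of_bmi b).

Definition enorm (R : realType) n (x : 'rV[R]_n) : R :=
  Num.sqrt (\sum_(i < n) x ord0 i ^+ 2).

Definition mpow (R : realType) n (x : 'rV[R]_n) (al : mindex n) : R :=
  \prod_(i < n) x ord0 i ^+ al i.

Definition poly_le (R : realType) (p n : nat) (f : 'rV[R]_n -> R) : Prop :=
  exists c : mindex n -> R, forall x, f x = sum_mi p (fun al => c al * mpow x al).

(* P_p^* : a functional is an element of the dual of P_p if it is linear on P_p
   (its values outside P_p are irrelevant and never used). *)
Definition dualp (R : realType) (p n : nat) (xi : ('rV[R]_n -> R) -> R) : Prop :=
  forall (f g : 'rV[R]_n -> R) (l : R), poly_le p f -> poly_le p g ->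
    xi (fun x => l * f x + g x) = l * xi f + xi g.

Definition xi_al (R : realType) n (xi : ('rV[R]_n -> R) -> R) (b : 'rV[R]_n)
  (al : mindex n) : R :=
  xi (fun x => (mfact al)%:R^-1 * mpow (x - b) al).

Definition taylor (R : realType) (p n : nat) (F : mindex n -> 'rV[R]_n -> R)
  (a : 'rV[R]_n) : 'rV[R]_n -> R :=
  fun x => sum_mi p (fun al => (mfact al)%:R^-1 * F al a * mpow (x - a) al).

Definition xiF (R : realType) (p n : nat) (xi : ('rV[R]_n -> R) -> R)
  (F : mindex n -> 'rV[R]_n -> R) (a : 'rV[R]_n) : R := xi (taylor p F a).

Definition wdelta (R : realType) (p n : nat) (F : mindex n -> 'rV[R]_n -> R)
  (al : mindex n) (a b : 'rV[R]_n) : R :=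
  (F al b - sum_mi (p - mdeg al)
     (fun be => (mfact be)%:R^-1 * F (mindex_add al be) a * mpow (b - a) be))
  / enorm (b - a) ^+ (p - mdeg al).

Definition whitney_field (R : realType) (p n : nat) (X : set 'rV[R]_n)
  (F : mindex n -> 'rV[R]_n -> R) : Prop :=
  forall c, X c -> forall al : mindex n, (mdeg al <= p)%N ->
  forall e : R, 0 < e -> exists2 eta : R, 0 < eta &
    forall a b, X a -> X b -> a != b -> enorm (a - c) < eta -> enorm (b - c) < eta ->
      `|wdelta p F al a b| < e.

Definition closed_in (T : topologicalType) (U X : set T) : Prop :=
  exists C : set T, closed C /\ X = U `&` C.

From HB Require Import structures.
From mathcomp Require Import all_boot all_order all_algebra.
From mathcomp Require Import all_classical all_reals all_analysis.
From mathcomp Require Import ring lra.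
Import Order.TTheory GRing.Theory Num.Theory numFieldNormedType.Exports.
Set Implicit Arguments. Unset Strict Implicit. Unset Printing Implicit Defensive.
Local Open Scope ring_scope.
Local Open Scope classical_set_scope.

(* Re-expanding the Taylor polynomial [T_A F] at [B] shows that for every xi in P_p^*
     xi(F,B) = xi(F,A) + sum_al r_al(A,B) xi_al(B),
   with remainder r_al(A,B) = F^al(B) - (D^al T_A F)(B) = delta_al(A,B) |B - A|^(p - |al|).
   With A = a_0j and B = a_ij, hypothesis (2) bounds |B - A|^(p - |al|) xi_ij,al(a_ij) by c,
   so the error terms are O(delta_al(a_0j, a_ij)) and tend to 0 for a Whitney field.
   With A = a_0j and B = a the base point moves to a: the error is
   sum_al r_al(a_0j, a) (sum_i xi_ij,al(a)), where r_al(a_0j, a) -> 0 and, by (1),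
   sum_i xi_ij,al(a) -> xi_al(a).  Finally sum_i xi_ij(F,a) -> xi(F,a) by (1) again. *)

Lemma exprDn_fact (R : numFieldType) p m (u v : R) : (m <= p)%N ->
  (m`!%:R)^-1 * (u + v) ^+ m =
  \sum_(j < p.+1 | (j <= m)%N) (j`!%:R)^-1 * u ^+ j * ((m - j)`!%:R^-1 * v ^+ (m - j)).
Proof.
move=> le_mp; rewrite addrC exprDn mulr_sumr.
rewrite (big_ord_widen p.+1 (fun j => m`!%:R^-1 * (v ^+ (m - j) * u ^+ j *+ 'C(m, j)))) //.
apply: eq_big => [j|j]; rewrite ltnS // => le_jm.
have fact_neq0 k : (k`!%:R : R) != 0 by rewrite pnatr_eq0 -lt0n fact_gt0.
have bin_neq0 : ('C(m, j)%:R : R) != 0 by rewrite pnatr_eq0 -lt0n bin_gt0.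
rewrite -[_ *+ 'C(m, j)]mulr_natr -(bin_fact le_jm) !natrM.
move: (fact_neq0 j) (fact_neq0 (m - j)%N) bin_neq0.
move: (j`!%:R : R) ((m - j)`!%:R : R) ('C(m, j)%:R : R) => x y z x0 y0 z0.
by field; rewrite x0 y0 z0.
Qed.

Section MultiIndices.
Variable n : nat.
Implicit Types al be : mindex n.

Definition le_mi al be : bool := [forall i, (al i <= be i)%N].
Definition sub_mi be al : mindex n := fun i => (be i - al i)%N.
Definition bmi_of p (m : mindex n) : bmi p n := [ffun i => inord (m i)].

Lemma of_bmi_ofK p m : (forall i, m i <= p)%N -> of_bmi (bmi_of p m) = m.
Proof. by move=> le_mp; apply: funext => i; rewrite /of_bmi /bmi_of ffunE inordK ?ltnS. Qed.

Lemma bmi_of_bmiK p (b : bmi p n) : bmi_of p (of_bmi b) = b.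
Proof.
by apply/ffunP => i; rewrite /bmi_of ffunE; apply: val_inj; rewrite /= inordK //; exact: ltn_ord.
Qed.

Lemma of_bmi_le p (b : bmi p n) i : (of_bmi b i <= p)%N.
Proof. by rewrite /of_bmi -ltnS ltn_ord. Qed.

Lemma leq_mdeg al i : (al i <= mdeg al)%N.
Proof. by rewrite /mdeg (bigD1 i) //= leq_addr. Qed.

Lemma mdeg_add al be : mdeg (mindex_add al be) = (mdeg al + mdeg be)%N.
Proof. exact: big_split. Qed.

Lemma le_mi_mdeg al be : le_mi al be -> (mdeg al <= mdeg be)%N.
Proof. by move=> /forallP le_ab; apply: leq_sum => i _; apply: le_ab. Qed.

Lemma mindex_add_subK al be : le_mi al be -> mindex_add al (sub_mi be al) = be.
Proof. by move=> /forallP le_ab; apply: funext => i; rewrite /mindex_add subnKC. Qed.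

Lemma mindex_addK al be : sub_mi (mindex_add al be) al = be.
Proof. by apply: funext => i; rewrite /sub_mi /mindex_add addKn. Qed.

Lemma le_mi_addr al be : le_mi al (mindex_add al be).
Proof. by apply/forallP => i; rewrite leq_addr. Qed.

Lemma mdeg_sub al be : le_mi al be -> mdeg (sub_mi be al) = (mdeg be - mdeg al)%N.
Proof. by move=> le_ab; rewrite -{2}(mindex_add_subK le_ab) mdeg_add addKn. Qed.

Lemma sum_mi_shift (R : realType) p al (G : mindex n -> R) : (mdeg al <= p)%N ->
  sum_mi (p - mdeg al) (fun be => G (mindex_add al be)) =
  \sum_(g : bmi p n | (mdeg (of_bmi g) <= p)%N && le_mi al (of_bmi g)) G (of_bmi g).
Proof.
move=> le_alp.
pose h (b : bmi (p - mdeg al) n) : bmi p n := bmi_of p (mindex_add al (of_bmi b)).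
pose h' (g : bmi p n) : bmi (p - mdeg al) n := bmi_of (p - mdeg al) (sub_mi (of_bmi g) al).
have hE b : of_bmi (h b) = mindex_add al (of_bmi b).
  apply: of_bmi_ofK => i; rewrite -[X in (_ <= X)%N](subnKC le_alp).
  exact: leq_add (leq_mdeg al i) (of_bmi_le b i).
rewrite (reindex_onto h h') /=; last first.
  move=> g /andP[le_gp le_ag]; rewrite /h of_bmi_ofK ?mindex_add_subK ?bmi_of_bmiK // => i.
  by rewrite (leq_trans (leq_mdeg _ i)) // mdeg_sub // leq_sub2r.
apply: eq_big => [b|b _]; last by rewrite hE.
by rewrite /h' hE mindex_addK bmi_of_bmiK eqxx le_mi_addr mdeg_add leq_subRL ?andbT.
Qed.
End MultiIndices.

Section TaylorPolynomials.
Variables (R : realType) (n : nat).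
Implicit Types (p : nat) (al be g : mindex n) (x A B : 'rV[R]_n).

Lemma mfactV al : ((mfact al)%:R : R)^-1 = \prod_i ((al i)`!%:R)^-1.
Proof. by rewrite /mfact natr_prod prodfV. Qed.

Lemma mpowDn_fact p g x A B : (forall i, g i <= p)%N ->
  (mfact g)%:R^-1 * mpow (x - A) g =
  \sum_(b : bmi p n | le_mi (of_bmi b) g)
     ((mfact (of_bmi b))%:R^-1 * mpow (x - B) (of_bmi b)) *
     ((mfact (sub_mi g (of_bmi b)))%:R^-1 * mpow (B - A) (sub_mi g (of_bmi b))).
Proof.
move=> le_gp; rewrite mfactV /mpow -big_split /=.
have xAE i : (x - A) ord0 i = (x - B) ord0 i + (B - A) ord0 i by rewrite !mxE; ring.
under eq_bigr do rewrite xAE (exprDn_fact _ _ (le_gp _)) big_mkcond.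
rewrite bigA_distr_bigA [RHS]big_mkcond /=; apply: eq_bigr => b _.
case: ifP => [/forallP le_bg | /negbT].
  by rewrite !mfactV -!big_split; apply: eq_bigr => i _; rewrite /= le_bg.
rewrite negb_forall => /existsP[i lt_gb].
by rewrite (bigD1 i) //= ifN // mul0r.
Qed.

Lemma poly_le0 p : poly_le p (fun _ : 'rV[R]_n => 0).
Proof. by exists (fun _ => 0) => x; rewrite /sum_mi big1 // => b _; rewrite mul0r. Qed.

Lemma poly_le_lin p (f h : 'rV[R]_n -> R) (l : R) :
  poly_le p f -> poly_le p h -> poly_le p (fun x => l * f x + h x).
Proof.
move=> [cf fE] [ch hE]; exists (fun al => l * cf al + ch al) => x.
by rewrite fE hE /sum_mi mulr_sumr -big_split; apply: eq_bigr => b _ /=; ring.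
Qed.

Lemma poly_le_sum p (I : Type) (r : seq I) (P : pred I) (l : I -> R)
    (f : I -> 'rV[R]_n -> R) : (forall t, P t -> poly_le p (f t)) ->
  poly_le p (fun x => \sum_(t <- r | P t) l t * f t x).
Proof.
move=> fP; elim: r => [|t r IH].
  by under eq_fun do rewrite big_nil; exact: poly_le0.
under eq_fun do rewrite big_cons.
by case Pt : (P t) => //; apply: poly_le_lin => //; apply: fP.
Qed.

Lemma poly_le_monomial p g A : (mdeg g <= p)%N ->
  poly_le p (fun x => (mfact g)%:R^-1 * mpow (x - A) g).
Proof.
move=> le_gp.
have le_gip i : (g i <= p)%N := leq_trans (leq_mdeg g i) le_gp.
pose c al := if le_mi al g then
  (mfact al)%:R^-1 * ((mfact (sub_mi g al))%:R^-1 * mpow (0 - A) (sub_mi g al)) else 0.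
exists c => x; rewrite (mpowDn_fact x A 0 le_gip) /sum_mi [LHS]big_mkcond [RHS]big_mkcond /=.
apply: eq_bigr => b _; rewrite /c; case: (boolP (le_mi _ g)) => le_bg.
  by rewrite (leq_trans (le_mi_mdeg le_bg) le_gp) subr0; ring.
by case: ifP; rewrite ?mul0r.
Qed.

Lemma taylorE p (F : mindex n -> 'rV[R]_n -> R) A :
  taylor p F A = fun x => sum_mi p (fun al => F al A * ((mfact al)%:R^-1 * mpow (x - A) al)).
Proof. by apply: funext => x; apply: eq_bigr => b _; rewrite mulrCA mulrA. Qed.

Lemma poly_le_taylor p (F : mindex n -> 'rV[R]_n -> R) A : poly_le p (taylor p F A).
Proof. by rewrite taylorE; apply: poly_le_sum => b; apply: poly_le_monomial. Qed.

Lemma dualp0 p (xi : ('rV[R]_n -> R) -> R) : dualp p xi -> xi (fun _ => 0) = 0.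
Proof.
move=> xi_lin; have := xi_lin _ _ 1 (poly_le0 p) (poly_le0 p).
by under eq_fun do rewrite mul1r addr0; move=> xi0E; lra.
Qed.

Lemma dualp_sum p (xi : ('rV[R]_n -> R) -> R) (I : Type) (r : seq I) (P : pred I)
    (l : I -> R) (f : I -> 'rV[R]_n -> R) :
  dualp p xi -> (forall t, P t -> poly_le p (f t)) ->
  xi (fun x => \sum_(t <- r | P t) l t * f t x) = \sum_(t <- r | P t) l t * xi (f t).
Proof.
move=> xi_lin fP; elim: r => [|t r IH].
  by under eq_fun do rewrite big_nil; rewrite big_nil (dualp0 xi_lin).
under eq_fun do rewrite big_cons; rewrite big_cons.
case Pt : (P t) => //; rewrite xi_lin ?IH //; first exact: fP.
exact: poly_le_sum.
Qed.

Lemma dualp_sum_mi p (xi : ('rV[R]_n -> R) -> R) (c : mindex n -> R) B : dualp p xi ->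
  xi (fun x => sum_mi p (fun al => c al * ((mfact al)%:R^-1 * mpow (x - B) al))) =
  sum_mi p (fun al => c al * xi_al xi B al).
Proof.
by move=> xi_lin; rewrite /sum_mi (dualp_sum _ _ xi_lin) // => b; apply: poly_le_monomial.
Qed.

End TaylorPolynomials.

Section EuclideanNorm.
Variables (R : realType) (n : nat).
Implicit Types v : 'rV[R]_n.

Lemma enorm_ge0 v : 0 <= enorm v.
Proof. exact: sqrtr_ge0. Qed.

Lemma enorm_eq0 v : enorm v = 0 -> v = 0.
Proof.
move=> /eqP; rewrite sqrtr_eq0 => sum_le0.
have sum0 : \sum_(i < n) v ord0 i ^+ 2 = 0.
  by apply/eqP; rewrite eq_le sum_le0 sumr_ge0 // => i _; exact: sqr_ge0.
apply/rowP => i; apply/eqP; rewrite mxE -sqrf_eq0.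
by apply/eqP; apply: (psumr_eq0P (fun i _ => sqr_ge0 (v ord0 i)) sum0).
Qed.

Lemma enorm_le_norm v : enorm v <= Num.sqrt n%:R * `|v|.
Proof.
rewrite /enorm -[`|v|]normr_id -sqrtr_sqr -sqrtrM // ler_sqrt; last exact: mulr_ge0.
have coord_le i : v ord0 i ^+ 2 <= `|v| ^+ 2.
  rewrite -real_normK ?num_real // lerXn2r ?nnegrE //.
  rewrite (_ : `|v| = mx_norm v) // mx_normrE.
  exact: (le_bigmax _ (fun ij : 'I_1 * 'I_n => `|v ij.1 ij.2|) (ord0, i)).
apply: le_trans (ler_sum _ (fun i _ => coord_le i)) _.
by rewrite sumr_const card_ord mulr_natl.
Qed.

Lemma cvg_enorm0 (u : nat -> 'rV[R]_n) :
  u @ \oo --> (0 : 'rV[R]_n) -> (fun j => enorm (u j)) @ \oo --> 0.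
Proof.
move=> u0; apply: (@squeeze_cvgr _ _ _ _ (fun=> 0) (fun j => Num.sqrt n%:R * `|u j|)).
- by near=> j; rewrite enorm_ge0 enorm_le_norm.
- exact: cvg_cst.
- have := cvg_norm u0; rewrite normr0 => normu0.
  by rewrite -(mulr0 (Num.sqrt n%:R)); apply: cvgMl_tmp; apply: normu0.
Unshelve. all: by end_near. Qed.

End EuclideanNorm.

Section TaylorExpansion.
Variables (R : realType) (n p : nat) (F : mindex n -> 'rV[R]_n -> R).
Implicit Types (al : mindex n) (x A B : 'rV[R]_n).

(* (D^al T^p_A F)(B); the same sum appears in the numerator of [wdelta]. *)
Definition taylor_deriv al A B : R :=
  sum_mi (p - mdeg al)
    (fun be => (mfact be)%:R^-1 * F (mindex_add al be) A * mpow (B - A) be).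

Lemma taylor_shift A B x :
  taylor p F A x =
  sum_mi p (fun al => taylor_deriv al A B * ((mfact al)%:R^-1 * mpow (x - B) al)).
Proof.
rewrite /taylor /sum_mi.
under eq_bigr => g _ do
  rewrite -mulrA mulrCA (mpowDn_fact x A B (of_bmi_le g)) mulr_sumr.
rewrite (exchange_big_dep (fun b : bmi p n => mdeg (of_bmi b) <= p)%N) /=; last first.
  by move=> g b le_gp /le_mi_mdeg le_bg; exact: leq_trans le_bg le_gp.
apply: eq_bigr => b le_bp.
pose G g := F g A * ((mfact (sub_mi g (of_bmi b)))%:R^-1 * mpow (B - A) (sub_mi g (of_bmi b))).
transitivity ((\sum_(g : bmi p n | (mdeg (of_bmi g) <= p)%N && le_mi (of_bmi b) (of_bmi g))
    G (of_bmi g)) * ((mfact (of_bmi b))%:R^-1 * mpow (x - B) (of_bmi b))).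
  by rewrite mulr_suml; apply: eq_bigr => g _; rewrite /G; ring.
rewrite -sum_mi_shift //; congr (_ * _); apply: eq_bigr => be _.
by rewrite /G mindex_addK; ring.
Qed.

Lemma mpow_eq0 (v : 'rV[R]_n) al i : v ord0 i = 0 -> al i != 0%N -> mpow v al = 0.
Proof. by move=> vi0 ali0; rewrite /mpow (bigD1 i) //= vi0 expr0n (negbTE ali0) mul0r. Qed.

Lemma taylor_deriv_id al A : taylor_deriv al A A = F al A.
Proof.
pose z : bmi (p - mdeg al) n := bmi_of _ (fun=> 0%N).
have zE : of_bmi z = fun=> 0%N by rewrite of_bmi_ofK.
rewrite /taylor_deriv /sum_mi (bigD1 z) /=; last by rewrite zE /mdeg big1.
rewrite big1 ?addr0 => [|b /andP[_ b_neq_z]].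
  rewrite zE /mfact /mpow fact0 big1_eq invr1 mul1r.
  under eq_bigr do rewrite expr0.
  rewrite big1_eq mulr1; congr F.
  by apply: funext => i; rewrite /mindex_add addn0.
have [i bi_neq0] : exists i, of_bmi b i != 0%N.
  apply/existsP; move: b_neq_z; apply: contraNT => /existsPn b0.
  by rewrite -(bmi_of_bmiK b); apply/eqP; congr bmi_of; apply: funext => i; apply/eqP/negPn.
by rewrite (mpow_eq0 _ bi_neq0) ?mulr0 // subrr mxE.
Qed.

Lemma wdelta_id al A : wdelta p F al A A = 0.
Proof. by rewrite /wdelta -/(taylor_deriv al A A) taylor_deriv_id subrr mul0r. Qed.

Lemma taylor_remainderE al A B :
  F al B - taylor_deriv al A B = wdelta p F al A B * enorm (B - A) ^+ (p - mdeg al).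
Proof.
have [<-|neq_AB] := eqVneq A B; first by rewrite taylor_deriv_id wdelta_id subrr mul0r.
rewrite /wdelta divfK // expf_neq0 //.
by apply: contra_neq neq_AB => /enorm_eq0 /subr0_eq.
Qed.

Lemma dualp_taylor_shift (xi : ('rV[R]_n -> R) -> R) A B : dualp p xi ->
  xi (taylor p F B) =
  xi (taylor p F A) + sum_mi p (fun al => (F al B - taylor_deriv al A B) * xi_al xi B al).
Proof.
move=> xi_lin; rewrite (funext (taylor_shift A B)) taylorE !dualp_sum_mi //.
by rewrite /sum_mi -big_split; apply: eq_bigr => b _ /=; ring.
Qed.

Lemma sum_dualp_taylor_rebase (I : finType) (xi : I -> ('rV[R]_n -> R) -> R)
    (b : I -> 'rV[R]_n) A a :
  (forall i, dualp p (xi i)) ->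
  \sum_i xi i (taylor p F (b i)) =
  \sum_i xi i (taylor p F a)
  - sum_mi p (fun al => (F al a - taylor_deriv al A a) * \sum_i xi_al (xi i) a al)
  + \sum_i sum_mi p (fun al => (F al (b i) - taylor_deriv al A (b i)) * xi_al (xi i) (b i) al).
Proof.
move=> xi_lin.
have rebase i : xi i (taylor p F A) = xi i (taylor p F a) -
    sum_mi p (fun al => (F al a - taylor_deriv al A a) * xi_al (xi i) a al).
  by rewrite (dualp_taylor_shift A a (xi_lin i)) addrK.
under eq_bigr => i _ do rewrite (dualp_taylor_shift A _ (xi_lin i)) rebase.
rewrite big_split sumrB /sum_mi exchange_big /=; congr (_ - _ + _).
by apply: eq_bigr => al _; rewrite mulr_sumr.
Qed.

End TaylorExpansion.

Lemma cvg0_mul_bounded (R : realFieldType) (T : Type) (G : set_system T) (FG : Filter G)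
    (f g : T -> R) (C : R) :
  f @ G --> 0 -> (forall t, `|g t| <= C) -> (fun t => f t * g t) @ G --> 0.
Proof.
move=> f0 gC; apply: norm_cvg0.
apply: (@squeeze_cvgr _ _ _ _ (fun=> 0) (fun t => `|f t| * C)).
- by near=> t; rewrite normr_ge0 normrM ler_wpM2l.
- exact: cvg_cst.
- have := cvg_norm f0; rewrite normr0 => normf0.
  by rewrite -(mul0r C); apply: cvgMr_tmp; apply: normf0.
Unshelve. all: by end_near. Qed.

Lemma cvg_enorm_sub0 (R : realType) n (u v : nat -> 'rV[R]_n) (c : 'rV[R]_n) :
  u @ \oo --> c -> v @ \oo --> c -> (fun j => enorm (v j - u j)) @ \oo --> 0.
Proof. by move=> uc vc; apply: cvg_enorm0; rewrite -(subrr c); apply: cvgB. Qed.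

Section WhitneyRemainders.
Variables (R : realType) (n p : nat) (X : set 'rV[R]_n) (F : mindex n -> 'rV[R]_n -> R).
Hypothesis whitneyF : whitney_field p X F.
Variables (c : 'rV[R]_n) (al : mindex n) (u v : nat -> 'rV[R]_n).
Hypotheses (Xc : X c) (le_alp : (mdeg al <= p)%N).
Hypotheses (Xu : forall j, X (u j)) (Xv : forall j, X (v j)).
Hypotheses (uc : u @ \oo --> c) (vc : v @ \oo --> c).

Lemma whitney_wdelta_cvg0 : (fun j => wdelta p F al (u j) (v j)) @ \oo --> 0.
Proof.
apply/cvgrPdist_lt => e e_gt0; have [eta eta_gt0 Wc] := whitneyF Xc le_alp e_gt0.
have near_c w : w @ \oo --> c -> \forall j \near \oo, enorm (w j - c) < eta.
  by move=> wc; apply: (cvgr_lt 0 (cvg_enorm_sub0 (cvg_cst c) wc)).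
near=> j; rewrite sub0r normrN.
have [<-|neq_uv] := eqVneq (u j) (v j); first by rewrite wdelta_id normr0.
apply: Wc; [exact: Xu | exact: Xv | exact: neq_uv | near: j | near: j].
- exact: near_c uc.
- exact: near_c vc.
Unshelve. all: by end_near. Qed.

Lemma taylor_remainder_cvg0 :
  (fun j => F al (v j) - taylor_deriv p F al (u j) (v j)) @ \oo --> 0.
Proof.
have -> : (fun j => F al (v j) - taylor_deriv p F al (u j) (v j)) =
    (fun j => wdelta p F al (u j) (v j) * enorm (v j - u j) ^+ (p - mdeg al)).
  by apply: funext => j; exact: taylor_remainderE.
rewrite -[X in _ --> X](mul0r (0 ^+ (p - mdeg al))); apply: cvgM.
  exact: whitney_wdelta_cvg0.
exact: continuous_cvg (@exprn_continuous R _ _) (cvg_enorm_sub0 uc vc).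
Qed.

Lemma taylor_remainder_mul_cvg0 (s : nat -> R) (C : R) :
  (forall j, enorm (v j - u j) ^+ (p - mdeg al) * `|s j| <= C) ->
  (fun j => (F al (v j) - taylor_deriv p F al (u j) (v j)) * s j) @ \oo --> 0.
Proof.
move=> bounded_s.
have -> : (fun j => (F al (v j) - taylor_deriv p F al (u j) (v j)) * s j) =
    (fun j => wdelta p F al (u j) (v j) * (enorm (v j - u j) ^+ (p - mdeg al) * s j)).
  by apply: funext => j; rewrite taylor_remainderE mulrA.
apply: (cvg0_mul_bounded _ whitney_wdelta_cvg0) => j.
by rewrite normrM ger0_norm ?exprn_ge0 ?enorm_ge0.
Qed.

End WhitneyRemainders.

Lemma cvg_sum0 (R : numFieldType) (T : Type) (G : set_system T) (FG : Filter G)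
    (I : Type) (r : seq I) (P : pred I) (f : I -> T -> R) :
  (forall i, P i -> f i @ G --> 0) -> (fun t => \sum_(i <- r | P i) f i t) @ G --> 0.
Proof.
move=> f0; rewrite -[X in _ --> X](big1 (op := +%R) r P (fun=> 0)) //.
by apply: cvg_big => //; exact: add_continuous.
Qed.

Theorem lemma4p8 (R : realType) (n p k : nat) (U X : set 'rV[R]_n)
  (a : 'I_k.+1 -> nat -> 'rV[R]_n) (xi : 'I_k.+1 -> nat -> ('rV[R]_n -> R) -> R)
  (a0 : 'rV[R]_n) (xi0 : ('rV[R]_n -> R) -> R) (c : R)
  (F : mindex n -> 'rV[R]_n -> R) :
  open U -> X `<=` U -> closed_in U X -> (1 <= k)%N ->
  (forall i j, X (a i j)) -> (forall i j, dualp p (xi i j)) ->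
  X a0 -> dualp p xi0 ->
  (forall i, a i @ \oo --> a0) ->
  (forall f, poly_le p f -> (fun j => \sum_(i < k.+1) xi i j f) @ \oo --> xi0 f) ->
  (forall i j (al : mindex n), (mdeg al <= p)%N ->
     enorm (a i j - a ord0 j) ^+ (p - mdeg al) * `|xi_al (xi i j) (a i j) al| <= c) ->
  whitney_field p X F ->
  (fun j => \sum_(i < k.+1) xiF p (xi i j) F (a i j)) @ \oo --> xiF p xi0 F a0.
Proof.
move=> _ _ _ _ Xa dual_xi Xa0 _ a_cvg xi_cvg xi_bounded whitneyF.
rewrite /xiF (funext (fun j => sum_dualp_taylor_rebase F (a^~ j) (a ord0 j) a0 (dual_xi^~ j))).
rewrite -[X in _ --> X]subr0 -[X in _ --> X]addr0.
apply: cvgD; first apply: cvgB.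
- exact: xi_cvg _ (poly_le_taylor p F a0).
- apply: cvg_sum0 => b le_bp; rewrite -[X in _ --> X](mul0r (xi_al xi0 a0 (of_bmi b))).
  apply: cvgM; last exact: xi_cvg _ (poly_le_monomial a0 le_bp).
  exact: (taylor_remainder_cvg0 (v := fun=> a0) whitneyF Xa0 le_bp
    (Xa ord0) (fun=> Xa0) (a_cvg ord0) (cvg_cst a0)).
- apply: cvg_sum0 => i _; apply: cvg_sum0 => b le_bp.
  apply: (taylor_remainder_mul_cvg0 whitneyF Xa0 le_bp (Xa ord0) (Xa i) (a_cvg ord0) (a_cvg i)).
  by move=> j; exact: xi_bounded.
Qed.
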